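(* Let $d\ge2$. For any feed-forward neural network architecture $\mathcal{A}$ with $d$ input neurons and the Heaviside activation $\sigma(x)=\mathds{1}_{x\ge0}$, the set $H_{\mathcal{A}}$ satisfies \[ \sup_{f \in \mathcal{M}^d} \inf_{g \in H_{\mathcal{A}}} \|f - g\|_{\infty} \geq \frac{1}{2}, \] where $\|\cdot\|_\infty$ is the sup norm on $[0,1]^d$.
   Context: $\mathcal{M}^d$ is the set of all functions $f:[0,1]^d\to[0,1]$ that are non-decreasing in the sense that $x_i\le y_i$ for all $i=1,\dots,d$ implies $f(x)\le f(y)$. A feed-forward architecture $\mathcal{A}$ is a directed acyclic graph with $d$ input nodes (in-degree $0$), a single output node (out-degree $0$), skip connections allowed; a real weight is attached to every edge and every non-input node. For weights $\mathbf w$, input neuron $v$ outputs $x_v$, each hidden neuron outputs $\sigma(\sum_{u\in P_v}w_{u\to v}y_u+w_v)$ ($P_v$ = predecessors), the output neuron outputs $\sum_{u\in P_v}w_{u\to v}y_u+w_v$; $H_{\mathcal{A}}$ is the set of all functions on $[0,1]^d$ so computed over all weight vectors. *)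

From HB Require Import structures.
From mathcomp Require Import all_boot all_order all_algebra.
From mathcomp Require Import all_classical all_reals all_analysis.
Set Implicit Arguments. Unset Strict Implicit. Unset Printing Implicit Defensive.
Import Order.TTheory GRing.Theory Num.Theory.
Local Open Scope ring_scope.
Local Open Scope classical_set_scope.

Definition heaviside (R : realType) (t : R) : R := if 0 <= t then 1 else 0.

(* A feed-forward architecture with d inputs, given in topological order:
   nodes are 0, ..., n-1; nodes 0..d-1 are the input nodes, node n-1 is the
   output node, nodes d..n-2 are hidden.  Edges (skip connections allowed)
   are given by the relation [edge]; an edge u -> v forces u < v < n
   (acyclicity), input nodes have in-degree 0, and the output node has
   out-degree 0 (automatic from u < v < n). *)
Record architecture (d : nat) := Architecture {
  nnodes : nat;
  edge : rel nat;
  edge_order : forall u v, edge u v -> (u < v)%N && (v < nnodes)%N;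
  edge_noninput : forall u v, edge u v -> (d <= v)%N;
  output_noninput : (d < nnodes)%N
}.

Definition cube (R : realType) (d : nat) : set ('I_d -> R) :=
  [set x | forall i, 0 <= x i <= 1].

Section Network.
Variables (R : realType) (d : nat) (A : architecture d).
Variables (w : nat -> nat -> R)
          (b : nat -> R)
          (x : 'I_d -> R).

(* output of node k given the outputs [s] of nodes 0..k-1 *)
Definition node_value (k : nat) (s : seq R) : R :=
  match (insub k : option 'I_d) with
  | Some i => x i
  | None =>
    let pre := \sum_(j < k | edge A j k) w j k * nth 0 s j + b k in
    if k == (nnodes A).-1 then pre else heaviside pre
  end.

Fixpoint node_outputs (k : nat) : seq R :=
  match k with
  | 0 => [::]
  | k'.+1 => let s := node_outputs k' in rcons s (node_value k' s)
  end.

Definition network_output : R := nth 0 (node_outputs (nnodes A)) (nnodes A).-1.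
End Network.

Definition H_A (R : realType) (d : nat) (A : architecture d) : set (('I_d -> R) -> R) :=
  [set g | exists (w : nat -> nat -> R) (b : nat -> R),
           g = fun x => network_output A w b x].

(* M^d : non-decreasing functions [0,1]^d -> [0,1] (values off the cube are
   irrelevant) *)
Definition monotone_cube (R : realType) (d : nat) : set (('I_d -> R) -> R) :=
  [set f | (forall x, cube x -> 0 <= f x <= 1) /\
           (forall x y, cube x -> cube y -> (forall i, x i <= y i) -> f x <= f y)].

Definition supnorm_cube (R : realType) (d : nat) (f g : ('I_d -> R) -> R) : \bar R :=
  ereal_sup [set (`|f x - g x|)%:E | x in cube (R:=R) (d:=d)].

From mathcomp Require Import all_boot all_order all_algebra.
From mathcomp Require Import all_classical all_reals all_analysis.
From mathcomp Require Import ring lra zify.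
Set Implicit Arguments. Unset Strict Implicit. Unset Printing Implicit Defensive.
Import Order.TTheory GRing.Theory Num.Theory.
Local Open Scope ring_scope.
Local Open Scope classical_set_scope.

(* The witness is the monotone indicator [curve_step] of the region
   x_1 >= (1 - x_0)^2 (other coordinates ignored), whose jump set is a strictly
   convex curve.  Going through the nodes in topological order, there is
   always an open square centred on the curve on which every hidden neuron
   seen so far is constant: on such a square the next pre-activation is affine
   in (x_0, x_1), so along the curve it is a quadratic, which unless the
   neuron ignores x_0 and x_1 is nonzero at some curve point nearby; a smaller
   square around that point then fixes the sign of the pre-activation.  On the
   last square the network output is affine with bounded slope, whereas
   [curve_step] jumps from 0 to 1 between two nearby points on either side of
   the curve, so one of them is at distance almost 1/2. *)

Lemma heavisideDr_small (R : realType) (q r : R) :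
  `|r| < `|q| -> heaviside (q + r) = heaviside q.
Proof.
rewrite /heaviside ltr_norml; case: (lerP 0 q) => hq.
  by rewrite ger0_norm // => /andP[h1 h2]; rewrite ifT //; lra.
by rewrite ltr0_norm // => /andP[h1 h2]; rewrite ifF //; apply/negbTE; rewrite -ltNge; lra.
Qed.

Lemma ltr_norm_lincomb (R : realType) (a c e0 e1 s q : R) :
  `|e0| < s -> `|e1| < s -> s * (`|a| + `|c| + 1) <= q ->
  `|a * e0 + c * e1| < q.
Proof.
move=> he0 he1 hq; apply: le_lt_trans (ler_normD _ _) _; rewrite !normrM.
have : `|a| * `|e0| <= `|a| * s by rewrite ler_wpM2l // ltW.
have : `|c| * `|e1| <= `|c| * s by rewrite ler_wpM2l // ltW.
have : 0 < s by apply: le_lt_trans he0.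
lra.
Qed.

Lemma curve_affine_nonzero (R : realType) (C a c p eta : R) :
  0 < eta -> (a != 0) || (c != 0) ->
  exists t, [/\ p < t, t <= p + 3 * eta &
                C + a * (t - p) + c * ((1 - t) ^+ 2 - (1 - p) ^+ 2) != 0].
Proof.
move=> heta; pose P t := C + a * (t - p) + c * ((1 - t) ^+ 2 - (1 - p) ^+ 2).
have [z1|] := eqVneq (P (p + eta)) 0; last by exists (p + eta); split=> //; lra.
have [z2|] := eqVneq (P (p + 2 * eta)) 0; last by exists (p + 2 * eta); split=> //; lra.
have [z3|] := eqVneq (P (p + 3 * eta)) 0; last by exists (p + 3 * eta); split=> //; lra.
(* [P (p + k * eta)] is a quadratic in [k] with leading coefficient [c * eta ^+ 2]. *)
move: z1 z2 z3; rewrite /P !expr2 => z1 z2 z3.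
have /eqP : c * (eta * eta) = 0 by lra.
rewrite !mulf_eq0 (gt_eqF heta) !orbF => /eqP c0.
have /eqP : a * eta = 0 by move: z1 z2; rewrite c0; lra.
by rewrite mulf_eq0 (gt_eqF heta) orbF => /eqP ->; rewrite c0 eqxx.
Qed.

Section Plane.
Variables (R : realType) (d : nat).

Definition coord (x : 'I_d -> R) (j : nat) : R :=
  if insub j is Some i then x i else 0.

Definition planar (a0 a1 : R) : 'I_d -> R :=
  fun i => if i == 0 :> nat then a0 else if i == 1 :> nat then a1 else 0.

Definition curve_point (t : R) : 'I_d -> R := planar t ((1 - t) ^+ 2).

Definition curve_step (x : 'I_d -> R) : R :=
  if (1 - coord x 0) ^+ 2 <= coord x 1 then 1 else 0.

Lemma coord_le (x y : 'I_d -> R) j :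
  (forall i, x i <= y i) -> coord x j <= coord y j.
Proof. by rewrite /coord; case: (insub j). Qed.

Lemma coord_cube (x : 'I_d -> R) j : cube x -> 0 <= coord x j <= 1.
Proof. by rewrite /coord; case: (insub j) => [i|] // _; rewrite lexx ler01. Qed.

Lemma planar_cube (a0 a1 : R) :
  0 <= a0 <= 1 -> 0 <= a1 <= 1 -> cube (planar a0 a1).
Proof.
move=> h0 h1 i; rewrite /planar.
by case: ifP => // _; case: ifP => // _; rewrite lexx ler01.
Qed.

Lemma curve_step_monotone : monotone_cube curve_step.
Proof.
split=> [x _|x y hx hy hxy]; first by rewrite /curve_step; case: ifP; rewrite lexx ler01.
rewrite /curve_step; case: ifP => hfx; last by case: ifP; rewrite ?lexx ?ler01.
rewrite ifT //.
have := coord_le 0 hxy; have := coord_le 1 hxy.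
have /andP[hx0 hx1] := coord_cube 0 hx; have /andP[hy0 hy1] := coord_cube 0 hy.
move=> hle1 hle0.
have : (1 - coord y 0) ^+ 2 <= (1 - coord x 0) ^+ 2 by rewrite !expr2; nra.
lra.
Qed.

Hypothesis hd : (1 < d)%N.

Lemma coord_planar0 (a0 a1 : R) : coord (planar a0 a1) 0 = a0.
Proof. by rewrite /coord insubT // (ltn_trans _ hd). Qed.

Lemma coord_planar1 (a0 a1 : R) : coord (planar a0 a1) 1 = a1.
Proof. by rewrite /coord insubT. Qed.

Lemma curve_step_across (p u : R) : 0 < p < 1 -> 0 < u <= (1 - p) ^+ 2 ->
  curve_step (planar (p + u) ((1 - p) ^+ 2 + u)) = 1 /\
  curve_step (planar (p - u) ((1 - p) ^+ 2 - u)) = 0.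
Proof.
move=> /andP[hp0 hp1] /andP[hu0 hu1]; rewrite /curve_step !coord_planar0 !coord_planar1.
move: hu1; rewrite !expr2 => hu1; split; first by rewrite ifT //; nra.
by rewrite ifF //; apply/negbTE; rewrite -ltNge; nra.
Qed.

Definition near_curve (p r : R) (x : 'I_d -> R) : Prop :=
  [/\ forall i : 'I_d, (2 <= i)%N -> x i = 0,
      `|coord x 0 - p| < r & `|coord x 1 - (1 - p) ^+ 2| < r].

Lemma near_curve_planar (p r a0 a1 : R) :
  `|a0 - p| < r -> `|a1 - (1 - p) ^+ 2| < r -> near_curve p r (planar a0 a1).
Proof.
by move=> h0 h1; split; rewrite ?coord_planar0 ?coord_planar1 //; case=> [[|[|i]] ?].
Qed.

Lemma near_curve_point (p r : R) : 0 < r -> near_curve p r (curve_point p).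
Proof. by move=> hr; apply: near_curve_planar; rewrite subrr normr0. Qed.

Lemma near_curve_sub (p r t s : R) :
  0 <= p <= t -> t <= p + 3 * r / 16 -> t <= 1 -> s <= r / 2 ->
  near_curve t s `<=` near_curve p r.
Proof.
move=> /andP[hp ht] htr ht1 hs x [hx hx0 hx1]; split=> //.
  by move: hx0; rewrite !ltr_distl => /andP[? ?]; apply/andP; split; lra.
have : (1 - t) ^+ 2 <= (1 - p) ^+ 2 <= (1 - t) ^+ 2 + 2 * (t - p).
  by rewrite !expr2; apply/andP; split; nra.
by move: hx1; rewrite !ltr_distl => /andP[? ?] /andP[? ?]; apply/andP; split; lra.
Qed.

Definition affine_near_curve (F : ('I_d -> R) -> R) (p r a c : R) : Prop :=
  forall x y, near_curve p r x -> near_curve p r y ->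
    F x - F y = a * (coord x 0 - coord y 0) + c * (coord x 1 - coord y 1).

Lemma heaviside_const_near_nonzero (F : ('I_d -> R) -> R) (p r a c t : R) :
  0 < r -> affine_near_curve F p r a c ->
  0 <= p <= t -> t <= p + 3 * r / 16 -> t <= 1 -> F (curve_point t) != 0 ->
  exists s : R, [/\ 0 < s, near_curve t s `<=` near_curve p r &
    forall x, near_curve t s x -> heaviside (F x) = heaviside (F (curve_point t))].
Proof.
move=> hr hF /andP[hp hpt] htr ht1; set q := F (curve_point t) => hq.
pose S := `|a| + `|c| + 1.
have hS : 0 < S by rewrite ltr_wpDl ?addr_ge0.
pose s := Order.min (r / 2) (`|q| / S).
have hs : 0 < s by rewrite lt_min; apply/andP; split; [lra | rewrite divr_gt0 ?normr_gt0].
have /andP[hsr hsq] : (s <= r / 2) && (s * S <= `|q|).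
  by rewrite -ler_pdivlMr // !ge_min !lexx orbT.
have sub_s : near_curve t s `<=` near_curve p r.
  by apply: near_curve_sub; rewrite ?hp ?hpt.
exists s; split=> // x hx.
have -> : F x = q + (a * (coord x 0 - t) + c * (coord x 1 - (1 - t) ^+ 2)).
  have := hF _ _ (sub_s x hx) (sub_s _ (near_curve_point t hs)).
  by rewrite coord_planar0 coord_planar1 /q; lra.
by apply: heavisideDr_small; case: hx => _ hx0 hx1; apply: ltr_norm_lincomb hx0 hx1 hsq.
Qed.

Lemma heaviside_const_near_curve (F : ('I_d -> R) -> R) (p r a c : R) :
  0 < p < 1 -> 0 < r -> affine_near_curve F p r a c ->
  exists t s, [/\ 0 < t < 1, 0 < s, near_curve t s `<=` near_curve p r &
    forall x y, near_curve t s x -> near_curve t s y ->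
      heaviside (F x) = heaviside (F y)].
Proof.
move=> /andP[hp0 hp1] hr hF.
have [/andP[/eqP a0 /eqP c0]|/[!negb_and] ac] := boolP ((a == 0) && (c == 0)).
  exists p, r; split=> // [|x y hx hy]; first by apply/andP.
  by have /eqP := hF x y hx hy; rewrite a0 c0 !mul0r addr0 subr_eq0 => /eqP ->.
pose eta := Order.min r (1 - p) / 16.
have heta : 0 < eta by rewrite divr_gt0 // lt_min hr subr_gt0.
have /andP[hetar hetap] : (eta <= r / 16) && (eta <= (1 - p) / 16).
  by rewrite !ler_pM2r // !ge_min !lexx ?orbT.
have Ft t : p <= t <= p + 3 * eta -> F (curve_point t) =
    F (curve_point p) + a * (t - p) + c * ((1 - t) ^+ 2 - (1 - p) ^+ 2).
  move=> /andP[hpt htp]; have hr2 : 0 < r / 2 by lra.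
  have sub : near_curve t (r / 2) `<=` near_curve p r.
    by apply: near_curve_sub; rewrite ?(ltW hp0) ?hpt //; lra.
  have := hF _ _ (sub _ (near_curve_point t hr2)) (near_curve_point p hr).
  by rewrite !coord_planar0 !coord_planar1; lra.
have [t [hpt htp]] := curve_affine_nonzero (F (curve_point p)) p heta ac.
rewrite -Ft => [hq|]; last by apply/andP; split; lra.
have [|||s [hs sub hFs]] := heaviside_const_near_nonzero hr hF _ _ _ hq; try lra.
by exists t, s; split=> // [|x y /hFs -> /hFs ->]; lra.
Qed.

Lemma curve_step_far_from_affine (F : ('I_d -> R) -> R) (p r a c e : R) :
  0 < p < 1 -> 0 < r -> affine_near_curve F p r a c -> 0 < e ->
  exists2 x, cube x & 2^-1 - e <= `|curve_step x - F x|.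
Proof.
move=> /andP[hp0 hp1] hr hF he.
pose S := `|a| + `|c| + 1.
have hS : 0 < S by rewrite ltr_wpDl ?addr_ge0.
have hq0 : 0 < (1 - p) ^+ 2 by rewrite exprn_gt0 // subr_gt0.
have hqp : (1 - p) ^+ 2 <= 1 - p by rewrite expr2; nra.
pose u := Order.min (Order.min p ((1 - p) ^+ 2)) (Order.min (r / 2) (e / S)).
have hu : 0 < u by rewrite !lt_min hp0 hq0 !divr_gt0 //; lra.
have /and4P[hup huq hur hue] : [&& u <= p, u <= (1 - p) ^+ 2, u <= r / 2 & u <= e / S].
  by have := lexx u; rewrite {2}/u !le_min -!andbA.
have huS : u * S <= e by rewrite -ler_pdivlMr.
pose x := planar (p + u) ((1 - p) ^+ 2 + u).
pose y := planar (p - u) ((1 - p) ^+ 2 - u).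
have [fx fy] : curve_step x = 1 /\ curve_step y = 0.
  by apply: curve_step_across; apply/andP.
have near_x : near_curve p r x.
  by apply: near_curve_planar; rewrite ltr_distl; apply/andP; split; lra.
have near_y : near_curve p r y.
  by apply: near_curve_planar; rewrite ltr_distl; apply/andP; split; lra.
have hFxy : `|F x - F y| <= 2 * e.
  rewrite hF // !coord_planar0 !coord_planar1.
  have -> : a * (p + u - (p - u)) + c * ((1 - p) ^+ 2 + u - ((1 - p) ^+ 2 - u))
          = (a + c) * (2 * u) by ring.
  rewrite normrM (@ger0_norm _ (2 * u)); last lra.
  have : `|a + c| <= S by apply: le_trans (ler_normD _ _) _; rewrite ler_wpDr.
  nra.
have [hfar|hnear] := lerP (2^-1 - e) `|curve_step x - F x|; first exists x => //.
  by apply: planar_cube; apply/andP; split; lra.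
exists y; first by apply: planar_cube; apply/andP; split; lra.
move: hnear hFxy; rewrite fx fy sub0r normrN ltr_norml ler_norml => /andP[? ?] /andP[? ?].
by apply: le_trans (ler_norm _); lra.
Qed.

End Plane.

Section Network.
Variables (R : realType) (d : nat) (A : architecture d).
Variables (w : nat -> nat -> R) (b : nat -> R).

Definition node_out (x : 'I_d -> R) (j : nat) : R :=
  nth 0 (node_outputs A w b x j.+1) j.

Definition preact (x : 'I_d -> R) (k : nat) : R :=
  \sum_(j < k | edge A j k) w j k * node_out x j + b k.

Definition edge_weight (j k : nat) : R := if edge A j k then w j k else 0.

Lemma size_node_outputs x k : size (node_outputs A w b x k) = k.
Proof. by elim: k => //= k IH; rewrite size_rcons IH. Qed.

Lemma nth_node_outputs x k j :
  (j < k)%N -> nth 0 (node_outputs A w b x k) j = node_out x j.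
Proof.
elim: k => // k IH; rewrite ltnS leq_eqVlt => /orP[/eqP -> //|hj].
by rewrite /= nth_rcons size_node_outputs hj IH.
Qed.

Lemma node_outE x j : node_out x j = node_value A w b x j (node_outputs A w b x j).
Proof. by rewrite /node_out /= nth_rcons size_node_outputs ltnn eqxx. Qed.

Lemma node_out_input x j : (j < d)%N -> node_out x j = coord x j.
Proof. by move=> hj; rewrite node_outE /node_value /coord insubT. Qed.

Lemma node_out_noninput x k : (d <= k)%N ->
  node_out x k = if k == (nnodes A).-1 then preact x k else heaviside (preact x k).
Proof.
move=> hk; rewrite node_outE /node_value insubF ?ltnNge ?hk // /preact.
by under eq_bigr => j _ do rewrite nth_node_outputs //.
Qed.

Lemma output_node_noninput : (d <= (nnodes A).-1)%N.
Proof.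
by rewrite -ltnS prednK ?output_noninput // (leq_ltn_trans _ (output_noninput A)).
Qed.

Lemma network_output_preact x : network_output A w b x = preact x (nnodes A).-1.
Proof.
have hN := output_node_noninput.
rewrite /network_output nth_node_outputs ?node_out_noninput ?eqxx //.
by rewrite prednK // (leq_ltn_trans _ (output_noninput A)).
Qed.

Hypothesis hd : (1 < d)%N.

Lemma preactB x y k : (d <= k)%N ->
  (forall i : 'I_d, (2 <= i)%N -> x i = y i) ->
  (forall j, (d <= j < k)%N -> node_out x j = node_out y j) ->
  preact x k - preact y k =
    edge_weight 0 k * (coord x 0 - coord y 0) + edge_weight 1 k * (coord x 1 - coord y 1).
Proof.
move=> hk hxy hhid; rewrite /preact opprD addrACA subrr addr0 -sumrB.
under eq_bigr => j _ do rewrite -mulrBr.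
have -> : k = (k - 2).+2 by rewrite -addn2 subnK // (leq_trans hd).
rewrite big_mkcond 2!big_ord_recl big1 ?addr0 /=.
  have hd0 : (0 < d)%N by apply: ltn_trans hd.
  rewrite /edge_weight /bump /= add1n !node_out_input //.
  by case: (edge A 0 _); case: (edge A 1 _); rewrite ?mul0r ?addr0 ?add0r.
move=> j _; case: ifP => // _; rewrite /bump /= !add1n.
have [hj|hj] := ltnP j.+2 d.
  by rewrite !node_out_input // /coord insubT /= hxy ?subrr ?mulr0.
by rewrite hhid ?subrr ?mulr0 // hj /=; have := ltn_ord j; lia.
Qed.

Definition hidden_const_on (P : set ('I_d -> R)) (k : nat) : Prop :=
  forall x y, P x -> P y -> forall j, (d <= j < k)%N -> node_out x j = node_out y j.

Definition hidden_const_near_curve (k : nat) : Prop :=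
  exists p r, [/\ 0 < p < 1, 0 < r & hidden_const_on (near_curve p r) k].

Lemma preact_affine_near_curve p r k :
  (d <= k)%N -> hidden_const_on (near_curve p r) k ->
  affine_near_curve (preact^~ k) p r (edge_weight 0 k) (edge_weight 1 k).
Proof.
move=> hk hc x y hx hy; apply: preactB => // [i hi|]; last exact: hc.
by case: hx => -> // _ _; case: hy => -> .
Qed.

Lemma hidden_const_near_curve_le k : (k <= d)%N -> hidden_const_near_curve k.
Proof. by move=> hk; exists 2^-1, 1; split; [lra | lra | move=> x y _ _ j; lia]. Qed.

Lemma hidden_const_near_curveS k : (d <= k)%N -> (k < (nnodes A).-1)%N ->
  hidden_const_near_curve k -> hidden_const_near_curve k.+1.
Proof.
move=> hdk hkN [p [r [hp hr hc]]].
have [t [s [ht hs sub hH]]] :=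
  heaviside_const_near_curve hd hp hr (preact_affine_near_curve hdk hc).
exists t, s; split=> // x y hx hy j /andP[hdj]; rewrite ltnS leq_eqVlt => /orP[/eqP ->|hjk].
  by rewrite !node_out_noninput // (ltn_eqF hkN); exact: hH.
by apply: hc => //; [apply: sub | apply: sub | apply/andP].
Qed.

Lemma hidden_const_near_curve_output : hidden_const_near_curve (nnodes A).-1.
Proof.
suff hle k : (k <= (nnodes A).-1)%N -> hidden_const_near_curve k by exact: hle.
elim: k => [|k IH] hk; first exact: hidden_const_near_curve_le.
have [hdk|hkd] := leqP d k; last exact: hidden_const_near_curve_le.
exact: hidden_const_near_curveS hdk hk (IH (ltnW hk)).
Qed.

Lemma network_far_from_curve_step e : 0 < e ->
  exists2 x, cube x & 2^-1 - e <= `|curve_step x - network_output A w b x|.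
Proof.
move=> he; have [p [r [hp hr hc]]] := hidden_const_near_curve_output.
have hF := preact_affine_near_curve output_node_noninput hc.
have [x hx hfar] := curve_step_far_from_affine hd hp hr hF he.
by exists x; rewrite // network_output_preact.
Qed.

End Network.

Theorem proposition4 (R : realType) (d : nat) (hd : (2 <= d)%N)
  (A : architecture d) :
  (((2%:R)^-1 : R)%:E <=
  ereal_sup [set ereal_inf [set supnorm_cube f g | g in @H_A R d A]
            | f in @monotone_cube R d])%E.
Proof.
apply: (@le_trans _ _ (ereal_inf [set supnorm_cube (@curve_step R d) g | g in H_A A]%E)).
  apply/ereal_infP => _ [g [w [b ->]] <-].
  apply/lee_addgt0Pr => e he.
  have [x hx hfar] := network_far_from_curve_step A w b hd he.
  apply: (@le_trans _ _ ((`|curve_step x - network_output A w b x|)%:E + e%:E)%E).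
    by rewrite -EFinD lee_fin; lra.
  by rewrite leeD2r //; apply: ereal_sup_ubound; exists x.
apply: ereal_sup_ubound; exists (@curve_step R d) => //.
exact: curve_step_monotone.
Qed.
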